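(* (i) Let $n\in\{3,4\}$ and let $P\in\mathbb{C}[z]$ be a polynomial of degree $n$ whose set of critical values is exactly $\{0,1\}$. Then $P$ is extendedly equivalent either to the Chebycheff polynomial $\frac12(1+T_n(z))$ or to a Belyi polynomial $P_{m,r}$ with $m,r\ge1$, $m+r=n$. (iii) There exists a polynomial $P\in\mathbb{C}[z]$ of degree $6$ whose set of critical values is exactly $\{0,1\}$ such that $P$ is not extendedly equivalent to its complex conjugate $\bar P$; in particular $P$ is not extendedly equivalent to any polynomial in $\mathbb{R}[z]$.
   Context: Two polynomials $P,Q\in\mathbb{C}[z]$ are right affine equivalent if $Q(z)=P(az+b)$ for some $a\in\mathbb{C}^*$, $b\in\mathbb{C}$. For $P$ with set of critical values $\{0,1\}$, the polynomial $1-P$ also has critical values $\{0,1\}$; $P$ and $Q$ are called extendedly equivalent if $Q$ is right affine equivalent to $P$ or to $1-P$. $T_n$ denotes the Chebycheff polynomial, $T_n(\cos\theta)=\cos(n\theta)$. For positive integers $m,r$ the Belyi polynomial is $P_{m,r}(z)=z^m(1-z)^r(m+r)^{m+r}m^{-m}r^{-r}$. For $P(z)=\sum a_iz^i$, $\bar P(z)=\sum \bar a_i z^i$ (coefficientwise complex conjugation). Critical values are the values of $P$ at roots of $P'$. *)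

From mathcomp Require Import all_boot all_algebra.
From mathcomp Require Export complex.
From mathcomp Require Import Rstruct.
Set Implicit Arguments. Unset Strict Implicit. Unset Printing Implicit Defensive.
Import GRing.Theory Num.Theory.
Local Open Scope ring_scope.

Definition C : numClosedFieldType := (Rdefinitions.R)[i].

Definition critical_value (P : {poly C}) (w : C) : Prop :=
  exists z : C, root P^`() z /\ P.[z] = w.

Definition crit_vals_01 (P : {poly C}) : Prop :=
  forall w : C, critical_value P w <-> (w = 0 \/ w = 1).

Definition right_affine_equiv (P Q : {poly C}) : Prop :=
  exists (a b : C), a != 0 /\ Q = P \Po (a *: 'X + b%:P).

Definition ext_equiv (P Q : {poly C}) : Prop :=
  right_affine_equiv P Q \/ right_affine_equiv (1 - P) Q.

(* Chebyshev polynomials T_n (T_n(cos t) = cos(n t)), via the standard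
   recurrence T_0 = 1, T_1 = X, T_{n+2} = 2 X T_{n+1} - T_n. *)
Fixpoint cheb_aux (n : nat) : {poly C} * {poly C} :=
  match n with
  | 0%N => (1, 'X)
  | k.+1 => let: (a, b) := cheb_aux k in (b, 2%:P * 'X * b - a)
  end.
Definition cheb (n : nat) : {poly C} := (cheb_aux n).1.

Definition cheb_half (n : nat) : {poly C} := 2^-1 *: (1 + cheb n).

Definition belyi (m r : nat) : {poly C} :=
  (((m + r)%:R ^+ (m + r)) / ((m%:R ^+ m) * (r%:R ^+ r))) *:
    ('X ^+ m * (1 - 'X) ^+ r).

Definition conj_poly (P : {poly C}) : {poly C} := map_poly Num.conj P.

Definition real_poly (P : {poly C}) : Prop :=
  forall i : nat, complex.Im (P`_i : Rdefinitions.R[i]) = 0.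

(* (i) The critical points of P are the roots of P' = l (z - z_1) ... (z - z_(n-1)). As
   both values 0 and 1 are taken, pick critical points a, c with P(a) = 0 and P(c) = 1; in
   degree 4, replacing P by 1 - P if necessary, the remaining critical point b has P(b) = 0.
   A polynomial is determined by its derivative and one value, so P is an explicit
   antiderivative vanishing at a; the condition P(c) = 1 fixes l (and when a <> b the
   condition P(b) = 0 forces c = (a + b) / 2), after which an explicit affine substitution
   turns P into P_{2,1}, P_{3,1} or P_{2,2}.

   (iii) The example P6 has a triple zero at 0, a double zero at 1 and a simple zero at a
   non-real point b. Affine substitutions preserve root multiplicities, so an equivalence
   between P6 and its conjugate must fix 0 and 1, hence be the identity, which fails at
   conj b; and 1 - P6 has a single double zero, while the conjugate has two. A real
   polynomial equivalent to P6 would make P6 equivalent to its own conjugate. *)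

From mathcomp Require Import all_boot all_algebra.
From mathcomp.algebra_tactics Require Import ring.
From mathcomp Require Import zify.
Import GRing.Theory Num.Theory.
Local Open Scope ring_scope.
Set Implicit Arguments. Unset Strict Implicit.

Lemma horner1 (R : nzRingType) (x : R) : (1 : {poly R}).[x] = 1.
Proof. by rewrite -polyC1 hornerC. Qed.

(* [hornerE] without its monoid-law simplifications, whose output [ring] cannot parse. *)
Definition hornerRingE := (hornerD, hornerN, hornerX, hornerC, hornerZ, hornerM,
  horner_exp, hornerMn, horner1).

Lemma perm_to_rem2 (T : eqType) (s : seq T) x y :
  x \in s -> y \in s -> x != y -> exists s', perm_eq s [:: x, y & s'].
Proof.
move=> xs ys xy; have /perm_to_rem sx := xs.
have /perm_to_rem sy : y \in rem x s.
  by move: ys; rewrite (perm_mem sx) inE eq_sym (negbTE xy).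
by exists (rem y (rem x s)); rewrite (perm_trans sx) // perm_cons.
Qed.

Section CharZeroPoly.
Variable R : numDomainType.
Implicit Types p q : {poly R}.

Lemma eq_poly_horner p q : (forall x, p.[x] = q.[x]) -> p = q.
Proof.
move=> pq; apply/eqP; rewrite -subr_eq0; apply/eqP.
apply: (@roots_geq_poly_eq0 _ _ [seq i%:R | i <- iota 0 (size (p - q))]).
- by apply/allP => _ /mapP[i _ ->]; rewrite rootE hornerD hornerN pq subrr.
- by rewrite map_inj_uniq ?iota_uniq // => i j /eqP; rewrite eqr_nat => /eqP.
- by rewrite size_map size_iota.
Qed.

Lemma size_deriv_num p : size p^`() = (size p).-1.
Proof.
have [/size1_polyC ->|p_gt1] := leqP (size p) 1%N.
  by rewrite derivC size_poly0 size_polyC; case: (p`_0 != 0).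
rewrite /deriv size_poly_eq // -mulr_natr mulf_neq0 ?pnatr_eq0 //.
have -> : (size p).-2.+1 = (size p).-1 by case: (size p) p_gt1 => [|[]].
by rewrite -lead_coefE lead_coef_eq0 -size_poly_gt0 ltnW.
Qed.

Lemma eq_poly_deriv p q u : p^`() = q^`() -> p.[u] = q.[u] -> p = q.
Proof.
move=> pq' pqu; have : (size (p - q)%R <= 1)%N.
  by rewrite -subn_eq0 subn1 -size_deriv_num derivB pq' subrr size_poly0.
move/size1_polyC => pqE; apply/eqP; rewrite -subr_eq0 pqE polyC_eq0.
by rewrite -(hornerC (p - q)`_0 u) -pqE hornerD hornerN pqu subrr.
Qed.

End CharZeroPoly.

Section AffineSubstitution.
Variable R : comNzRingType.
Implicit Types (p : {poly R}) (a b c d x : R).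

Lemma horner_comp_affine p a b x : (p \Po (a *: 'X + b%:P)).[x] = p.[a * x + b].
Proof. by rewrite horner_comp !hornerRingE. Qed.

Lemma comp_poly_affine a b c d :
  (a *: 'X + b%:P) \Po (c *: 'X + d%:P) = (a * c) *: 'X + (a * d + b)%:P.
Proof.
by rewrite comp_polyD comp_polyZ comp_polyX comp_polyC scalerDr scalerA
  -addrA polyCD polyCM mul_polyC.
Qed.

Lemma derivn_comp_affine k p a b :
  (p \Po (a *: 'X + b%:P))^`(k) = a ^+ k *: (p^`(k) \Po (a *: 'X + b%:P)).
Proof.
elim: k => [|k IHk]; first by rewrite expr0 scale1r.
rewrite !derivnS IHk derivZ deriv_comp !derivE addr0 -scalerAr mulr1 scalerA.
by rewrite exprSr.
Qed.

End AffineSubstitution.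

Section MultipleRoots.
Variable R : idomainType.
Implicit Types (p : {poly R}) (a b x : R).

(* In characteristic 0: x is a root of p of multiplicity greater than k. *)
Definition multiple_root (k : nat) p x : Prop := forall i, (i <= k)%N -> root p^`(i) x.

Lemma multiple_rootW k k' p x :
  (k <= k')%N -> multiple_root k' p x -> multiple_root k p x.
Proof. by move=> kk' pk' i ik; apply: pk'; apply: leq_trans ik kk'. Qed.

Lemma multiple_root_comp_affine k p a b x : a != 0 ->
  multiple_root k (p \Po (a *: 'X + b%:P)) x <-> multiple_root k p (a * x + b).
Proof.
move=> a0; have E i : root (p \Po (a *: 'X + b%:P))^`(i) x = root p^`(i) (a * x + b).
  by rewrite derivn_comp_affine rootZ ?expf_neq0 // !rootE horner_comp_affine.
by split=> pk i /pk; rewrite E.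
Qed.

End MultipleRoots.

Lemma multiple_root_conj k (P : {poly C}) x :
  multiple_root k (conj_poly P) (Num.conj x) <-> multiple_root k P x.
Proof.
have E i : root (conj_poly P)^`(i) (Num.conj x) = root P^`(i) x.
  by rewrite /conj_poly derivn_map !rootE horner_map fmorph_eq0.
by split=> Pk i /Pk; rewrite E.
Qed.

Lemma deriv_oneB (P : {poly C}) : (1 - P)^`() = - P^`().
Proof. by rewrite derivB -polyC1 derivC sub0r. Qed.

(** * Right affine and extended equivalence *)

Section RightAffineEquiv.
Implicit Types P Q S : {poly C}.

Lemma right_affine_equiv_horner P Q a b :
  a != 0 -> (forall x, Q.[x] = P.[a * x + b]) -> right_affine_equiv P Q.
Proof.
by move=> a0 QP; exists a, b; split=> //; apply: eq_poly_horner => x;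
  rewrite QP horner_comp_affine.
Qed.

Lemma right_affine_equiv_sym P Q : right_affine_equiv P Q -> right_affine_equiv Q P.
Proof.
case=> a [b [a0 ->]]; exists a^-1, (- (b / a)); split; first by rewrite invr_eq0.
rewrite -comp_polyA comp_poly_affine divff // mulrN mulrCA divff // mulr1 addNr.
by rewrite scale1r addr0 comp_polyXr.
Qed.

Lemma right_affine_equiv_trans P Q S :
  right_affine_equiv P Q -> right_affine_equiv Q S -> right_affine_equiv P S.
Proof.
case=> a [b [a0 ->]] [c [d [c0 ->]]]; exists (a * c), (a * d + b).
by rewrite mulf_neq0 // -comp_polyA comp_poly_affine.
Qed.

Lemma right_affine_equiv_conj P Q :
  right_affine_equiv P Q -> right_affine_equiv (conj_poly P) (conj_poly Q).
Proof.
case=> a [b [a0 ->]]; exists (Num.conj a), (Num.conj b); split.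
  by rewrite conjC_eq0.
by rewrite /conj_poly map_comp_poly rmorphD /= map_polyZ map_polyX map_polyC.
Qed.

Lemma right_affine_equiv_oneB P Q :
  right_affine_equiv P Q -> right_affine_equiv (1 - P) (1 - Q).
Proof. by case=> a [b [a0 ->]]; exists a, b; rewrite comp_polyB comp_polyC. Qed.

Lemma ext_equiv_oneB P Q : ext_equiv (1 - P) Q -> ext_equiv P Q.
Proof. by rewrite /ext_equiv subKr; case; [right|left]. Qed.

Lemma conj_poly_real Q : real_poly Q -> conj_poly Q = Q.
Proof.
move=> QR; apply/polyP => i; rewrite coef_map /=.
by move: (QR i); case: (Q`_i) => x y /= ->; rewrite /Num.conj /= oppr0.
Qed.

Lemma right_affine_equiv_conj_of_real P Q : conj_poly Q = Q ->
  right_affine_equiv P Q -> right_affine_equiv P (conj_poly P).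
Proof.
move=> QR PQ; apply: (right_affine_equiv_trans PQ); apply: right_affine_equiv_sym.
by rewrite -[X in right_affine_equiv _ X]QR; apply: right_affine_equiv_conj.
Qed.

Lemma ext_equiv_conj_of_real P Q :
  real_poly Q -> ext_equiv P Q -> ext_equiv P (conj_poly P).
Proof.
move=> /conj_poly_real QR [PQ|PQ]; left.
  exact: right_affine_equiv_conj_of_real QR PQ.
have := right_affine_equiv_oneB (right_affine_equiv_conj_of_real QR PQ).
by rewrite /conj_poly rmorphB rmorph1 !subKr.
Qed.

End RightAffineEquiv.

(** * Degrees 3 and 4 *)

Section SmallDegree.
Implicit Types (P : {poly C}) (l a b c : C).

Lemma subr_neq0_of_horner01 P a c : P.[a] = 0 -> P.[c] = 1 -> c - a != 0.
Proof.
move=> Pa Pc; rewrite subr_eq0; apply/eqP => ca.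
by move: Pc; rewrite ca Pa => /eqP; rewrite eq_sym oner_eq0.
Qed.

Lemma belyi21_of_deriv P l a c : l != 0 ->
  (forall x, P^`().[x] = l * ((x - a) * (x - c))) -> P.[a] = 0 -> P.[c] = 1 ->
  right_affine_equiv P (belyi 2 1).
Proof.
move=> l0 P' Pa Pc; have ca := subr_neq0_of_horner01 Pa Pc.
pose R : {poly C} := (l / 6) *: (('X - a%:P) ^+ 2 * (2 *: 'X + (a - 3 * c)%:P)).
have PR : P = R.
  apply: (eq_poly_deriv (u := a)); last by rewrite Pa /R !hornerRingE subrr; ring.
  by apply: eq_poly_horner => x; rewrite P' /R !derivE !hornerRingE; field.
have lE : l = -6 / (c - a) ^+ 3.
  by move: Pc; rewrite PR /R !hornerRingE => <-; field.
apply: (right_affine_equiv_horner (a := 3 * (c - a) / 2) (b := a)).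
  by rewrite !mulf_neq0 ?invr_eq0 ?pnatr_eq0.
by move=> x; rewrite PR /R /belyi !hornerRingE lE; field.
Qed.

Lemma belyi31_of_deriv P l a c : l != 0 ->
  (forall x, P^`().[x] = l * ((x - a) * (x - a) * (x - c))) ->
  P.[a] = 0 -> P.[c] = 1 -> right_affine_equiv P (belyi 3 1).
Proof.
move=> l0 P' Pa Pc; have ca := subr_neq0_of_horner01 Pa Pc.
pose R : {poly C} := (l / 12) *: (('X - a%:P) ^+ 3 * (3 *: 'X + (a - 4 * c)%:P)).
have PR : P = R.
  apply: (eq_poly_deriv (u := a)); last by rewrite Pa /R !hornerRingE subrr; ring.
  by apply: eq_poly_horner => x; rewrite P' /R !derivE !hornerRingE; field.
have lE : l = -12 / (c - a) ^+ 4.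
  by move: Pc; rewrite PR /R !hornerRingE => <-; field.
apply: (right_affine_equiv_horner (a := 4 * (c - a) / 3) (b := a)).
  by rewrite !mulf_neq0 ?invr_eq0 ?pnatr_eq0.
by move=> x; rewrite PR /R /belyi !hornerRingE lE; field.
Qed.

Lemma belyi22_of_deriv P l a b c : l != 0 -> a != b ->
  (forall x, P^`().[x] = l * ((x - a) * (x - b) * (x - c))) ->
  P.[a] = 0 -> P.[b] = 0 -> P.[c] = 1 -> right_affine_equiv P (belyi 2 2).
Proof.
move=> l0 ab P' Pa Pb Pc; have ba : b - a != 0 by rewrite subr_eq0 eq_sym.
pose d := c - (a + b) / 2.
pose R : {poly C} := (l / 4) *: (('X - a%:P) * ('X - b%:P)) ^+ 2
  - (l * d / 6) *: (('X - a%:P) ^+ 2 * (2 *: 'X + (a - 3 * b)%:P)).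
have PR : P = R.
  apply: (eq_poly_deriv (u := a)); last by rewrite Pa /R !hornerRingE subrr; ring.
  by apply: eq_poly_horner => x; rewrite P' /R /d !derivE !hornerRingE; field.
have cE : c = (a + b) / 2.
  have : l * d * (b - a) ^+ 3 = 6 * P.[b] by rewrite PR /R !hornerRingE; field.
  rewrite Pb mulr0 => /eqP.
  by rewrite !mulf_eq0 (negbTE l0) (negbTE ba) /= orbF subr_eq0 => /eqP.
have lE : l = 64 / (b - a) ^+ 4.
  by move: Pc; rewrite PR /R /d cE !hornerRingE => <-; field.
apply: (right_affine_equiv_horner (a := b - a) (b := a)) => // x.
by rewrite PR /R /d cE /belyi !hornerRingE lE; field.
Qed.

End SmallDegree.

Definition ext_equiv_belyi (n : nat) (P : {poly C}) : Prop :=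
  exists m r : nat,
    [/\ (1 <= m)%N, (1 <= r)%N, (m + r)%N = n & ext_equiv P (belyi m r)].

Lemma ext_equiv_belyi4_of_zeros (P : {poly C}) l a b c : l != 0 ->
  (forall x, P^`().[x] = l * ((x - a) * (x - b) * (x - c))) ->
  P.[a] = 0 -> P.[b] = 0 -> P.[c] = 1 -> ext_equiv_belyi 4 P.
Proof.
move=> l0 P' Pa Pb Pc; have [ab|ab] := eqVneq a b.
  rewrite -ab in P'; exists 3%N, 1%N; split=> //; left.
  exact: belyi31_of_deriv l0 P' Pa Pc.
by exists 2%N, 2%N; split=> //; left; apply: belyi22_of_deriv l0 ab P' Pa Pb Pc.
Qed.

Lemma ext_equiv_belyi4 (P : {poly C}) l a b c : l != 0 ->
  (forall x, P^`().[x] = l * ((x - a) * (x - b) * (x - c))) ->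
  P.[a] = 0 -> P.[c] = 1 -> P.[b] = 0 \/ P.[b] = 1 -> ext_equiv_belyi 4 P.
Proof.
move=> l0 P' Pa Pc [Pb|Pb]; first exact: ext_equiv_belyi4_of_zeros l0 P' Pa Pb Pc.
have [m [r [m1 r1 mr /ext_equiv_oneB PE]]] : ext_equiv_belyi 4 (1 - P).
  apply: (@ext_equiv_belyi4_of_zeros _ (- l) c b a); rewrite ?oppr_eq0 //.
  - by move=> x; rewrite deriv_oneB hornerN P'; ring.
  - by rewrite !hornerRingE Pc subrr.
  - by rewrite !hornerRingE Pb subrr.
  - by rewrite !hornerRingE Pa subr0.
by exists m, r.
Qed.

Lemma crit_vals_01_deriv_factor (P : {poly C}) : crit_vals_01 P -> (3 < size P)%N ->
  exists l a c (s : seq C), [/\ l != 0, P.[a] = 0 /\ P.[c] = 1,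
    size s = (size P - 4)%N, forall z, z \in s -> P.[z] = 0 \/ P.[z] = 1
    & forall x, P^`().[x] = l * ((x - a) * (x - c) * \prod_(z <- s) (x - z))].
Proof.
move=> crit sizeP; have [s0 P'E] := closed_field_poly_normal P^`().
set l := lead_coef P^`() in P'E.
have l0 : l != 0.
  by rewrite lead_coef_eq0 -size_poly_eq0 size_deriv_num -(subnK sizeP) addn4.
have root_s0 z : root P^`() z = (z \in s0) by rewrite P'E rootZ // root_prod_XsubC.
have crit_s0 z : z \in s0 -> P.[z] = 0 \/ P.[z] = 1.
  by rewrite -root_s0 => z0; apply/crit; exists z.
have [a s0a Pa] : exists2 a, a \in s0 & P.[a] = 0.
  by have [a [a0 Pa]] := (crit 0).2 (or_introl erefl); exists a; rewrite -?root_s0.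
have [c s0c Pc] : exists2 c, c \in s0 & P.[c] = 1.
  by have [c [c0 Pc]] := (crit 1).2 (or_intror erefl); exists c; rewrite -?root_s0.
have ac : a != c by rewrite eq_sym -subr_eq0 (subr_neq0_of_horner01 Pa Pc).
have [s s0E] := perm_to_rem2 s0a s0c ac.
exists l, a, c, s; split=> //.
- have := size_deriv_num P; rewrite P'E size_scale // size_prod_XsubC (perm_size s0E) /=.
  (* [set] identifies two canonical-instance spellings of [size P] that [lia] keeps apart *)
  by move: sizeP; rewrite -subn1; set n := size P; lia.
- by move=> z zs; apply: crit_s0; rewrite (perm_mem s0E) !inE zs !orbT.
move=> x; rewrite {1}P'E hornerZ horner_prod (perm_big _ s0E) !big_cons /=.
by rewrite !hornerRingE mulrA; under eq_bigr do rewrite !hornerRingE.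
Qed.

Lemma crit_vals_01_deg34_belyi (n : nat) (P : {poly C}) :
  (n = 3 \/ n = 4)%N -> size P = n.+1 -> crit_vals_01 P -> ext_equiv_belyi n P.
Proof.
move=> n34 sizeP crit; have : (3 < size P)%N by rewrite sizeP; case: n34 => ->.
case/(crit_vals_01_deriv_factor crit) => l [a [c [s [l0 [Pa Pc] sizes crit_s P']]]].
case: n34 => n_eq; rewrite sizeP n_eq in sizes; subst n.
  case: s sizes crit_s P' => // _ _ P'.
  exists 2%N, 1%N; split=> //; left; apply: belyi21_of_deriv l0 _ Pa Pc => x.
  by rewrite P' big_nil mulr1.
case: s sizes crit_s P' => [|b []] // _ crit_s P'.
apply: (ext_equiv_belyi4 (b := b) l0 _ Pa Pc (crit_s b (mem_head _ _))) => x.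
by rewrite P' big_seq1; ring.
Qed.

(** * A degree-6 polynomial not equivalent to its conjugate *)

(* P6 = c z^3 (z - 1)^2 (z - b6) with b6 = 2 p6^2, where p6 is a root of 5 z^2 - 6 z + 2:
   then P6' = 6 c z^2 (z - 1) (z - p6)^2, and c is chosen so that P6(p6) = 1. *)
Definition p6 : C := (3 + 'i) / 5.
Definition b6 : C := 2 * p6 ^+ 2.
Definition Q6 : {poly C} := \prod_(z <- [:: 0; 0; 0; 1; 1; b6]) ('X - z%:P).
Definition P6 : {poly C} := Q6.[p6]^-1 *: Q6.

Lemma p6_sqr : p6 ^+ 2 = (6 * p6 - 2) / 5.
Proof. by rewrite /p6; field: (sqrCi C). Qed.

Lemma nonreal_neq (x y : C) : x \isn't Num.real -> y \is Num.real -> x != y.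
Proof. by move=> xR yR; apply: contraNneq xR => ->. Qed.

Lemma nonreal_affine (r s x : C) : r \is Num.real -> r != 0 -> s \is Num.real ->
  x \isn't Num.real -> r * x + s \isn't Num.real.
Proof.
move=> rR r0 sR; apply: contra => rxsR.
have -> : x = r^-1 * (r * x + s - s) by field.
by rewrite rpredM ?rpredV ?rpredB.
Qed.

Lemma p6_nonreal : p6 \isn't Num.real.
Proof.
have -> : p6 = 5^-1 * 'i + 3 / 5 by rewrite /p6; field.
by rewrite nonreal_affine ?nonRealCi ?rpredV ?rpred_div ?rpred_nat ?invr_eq0 ?pnatr_eq0.
Qed.

Lemma b6_nonreal : b6 \isn't Num.real.
Proof.
have -> : b6 = 12 / 5 * p6 + (- 4 / 5) by rewrite /b6 p6_sqr; field.
by rewrite nonreal_affine ?p6_nonreal ?rpred_div ?rpredN ?rpred_nat ?mulf_neq0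
  ?invr_eq0 ?pnatr_eq0.
Qed.

Lemma b6_neq_p6 : b6 != p6.
Proof.
rewrite -subr_eq0.
have -> : b6 - p6 = 7 / 5 * p6 + (- 4 / 5) by rewrite /b6 p6_sqr; field.
by rewrite nonreal_neq ?rpred0 // nonreal_affine ?p6_nonreal ?rpred_div ?rpredN
  ?rpred_nat ?mulf_neq0 ?invr_eq0 ?pnatr_eq0.
Qed.

Lemma p6_neq0 : p6 != 0. Proof. by rewrite nonreal_neq ?p6_nonreal ?rpred0. Qed.
Lemma p6_neq1 : p6 != 1. Proof. by rewrite nonreal_neq ?p6_nonreal ?rpred1. Qed.

Lemma Q6_p6_neq0 : Q6.[p6] != 0.
Proof.
rewrite -rootE root_prod_XsubC !inE (negbTE p6_neq0) (negbTE p6_neq1) /=.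
by rewrite eq_sym b6_neq_p6.
Qed.

Lemma root_P6 x : root P6 x = (x \in [:: 0; 0; 0; 1; 1; b6]).
Proof. by rewrite rootZ ?invr_eq0 ?Q6_p6_neq0 ?root_prod_XsubC. Qed.

Lemma P6_p6 : P6.[p6] = 1.
Proof. by rewrite hornerZ mulVf ?Q6_p6_neq0. Qed.

Lemma size_P6 : size P6 = 7%N.
Proof. by rewrite size_scale ?invr_eq0 ?Q6_p6_neq0 // size_prod_XsubC. Qed.

Lemma deriv_P6 :
  P6^`() = (6 * Q6.[p6]^-1) *: \prod_(z <- [:: 0; 0; 1; p6; p6]) ('X - z%:P).
Proof.
rewrite derivZ mulrC -scalerA; congr (_ *: _); apply: eq_poly_horner => x.
have sq : (x - p6) * (x - p6) = x ^+ 2 - 2 * p6 * x + (6 * p6 - 2) / 5.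
  by rewrite -p6_sqr; ring.
rewrite /Q6 !big_cons big_nil !derivE !hornerRingE !mulr1 sq /b6 p6_sqr.
by field.
Qed.

Lemma root_deriv_P6 x : root P6^`() x = (x \in [:: 0; 0; 1; p6; p6]).
Proof.
by rewrite deriv_P6 rootZ ?root_prod_XsubC // mulf_neq0 ?pnatr_eq0 ?invr_eq0 ?Q6_p6_neq0.
Qed.

Lemma horner_derivn2_P6 x :
  P6^`(2).[x] = 6 * Q6.[p6]^-1 * (x * (x - p6) *
    (2 * (x - 1) * (x - p6) + x * (x - p6) + 2 * x * (x - 1))).
Proof.
rewrite derivnS derivn1 deriv_P6 derivZ hornerZ !big_cons big_nil !derivE.
by rewrite !hornerRingE; ring.
Qed.

Lemma multiple_root1_P6 x : multiple_root 1 P6 x <-> x = 0 \/ x = 1.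
Proof.
split=> [P6x|x01].
  have := P6x 0%N isT; have := P6x 1%N isT.
  rewrite derivn0 derivn1 root_P6 root_deriv_P6 !inE.
  have [->|x0] := eqVneq x 0; first by left.
  have [->|x1] := eqVneq x 1; first by right.
  rewrite /= orbb => /eqP xp /eqP xb.
  by move: b6_neq_p6; rewrite -xb xp eqxx.
case=> [|[|i]] // _; rewrite ?derivn0 ?derivn1 ?root_P6 ?root_deriv_P6 !inE;
  by case: x01 => ->; rewrite eqxx /= ?orbT.
Qed.

Lemma multiple_root2_P6 x : multiple_root 2 P6 x <-> x = 0.
Proof.
have d2P6_1 : P6^`(2).[1] = 6 * Q6.[p6]^-1 * (1 - p6) ^+ 2.
  by rewrite horner_derivn2_P6; ring.
split=> [P6x|->].
  have [//|x1] := (multiple_root1_P6 x).1 (multiple_rootW (isT : (1 <= 2)%N) P6x).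
  move: (P6x 2%N isT); rewrite x1 rootE d2P6_1; apply: contraTeq => _.
  by rewrite !mulf_neq0 ?expf_neq0 ?pnatr_eq0 ?invr_eq0 ?Q6_p6_neq0 // subr_eq0 eq_sym p6_neq1.
case=> [|[|[|i]]] // _; first exact: (multiple_root1_P6 0).2 (or_introl erefl) 0%N isT.
  exact: (multiple_root1_P6 0).2 (or_introl erefl) 1%N isT.
by rewrite rootE horner_derivn2_P6 !(mul0r, mulr0).
Qed.

Lemma multiple_root1_oneB_P6 x : multiple_root 1 (1 - P6) x -> x = p6.
Proof.
move=> P6x; have /rootP := P6x 0%N isT.
rewrite derivn0 hornerD hornerN horner1 => /subr0_eq P6x1.
have x_neq y : root P6 y -> x != y.
  move=> /rootP P6y; apply/eqP => xy.
  by move: P6x1; rewrite xy P6y => /eqP; rewrite oner_eq0.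
have := P6x 1%N isT; rewrite derivn1 deriv_oneB rootN root_deriv_P6 !inE.
have x0 : x != 0 by apply: x_neq; rewrite root_P6 mem_head.
have x1 : x != 1 by apply: x_neq; rewrite root_P6 !inE eqxx /= !orbT.
by rewrite (negbTE x0) (negbTE x1) /= orbb => /eqP.
Qed.

Lemma root_P6_conj_b6 : ~~ root P6 (Num.conj b6).
Proof.
have cb6R : Num.conj b6 \isn't Num.real by rewrite CrealJ b6_nonreal.
have cb6 : (Num.conj b6 == b6) = false by rewrite -CrealE (negbTE b6_nonreal).
by rewrite root_P6 !inE cb6 !(negbTE (nonreal_neq cb6R _)) ?rpred0 ?rpred1.
Qed.

Lemma not_ext_equiv_conj_P6 : ~ ext_equiv P6 (conj_poly P6).
Proof.
have conj_mroot k x : multiple_root k P6 x ->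
    multiple_root k (conj_poly P6) (Num.conj x) by move/multiple_root_conj.
have := conj_mroot _ _ ((multiple_root2_P6 0).2 erefl); rewrite rmorph0 => Q0.
have := conj_mroot _ _ ((multiple_root1_P6 1).2 (or_intror erefl)); rewrite rmorph1 => Q1.
have Qb : multiple_root 0 (conj_poly P6) (Num.conj b6).
  by apply: conj_mroot => -[] // _; rewrite derivn0 root_P6 !inE eqxx /= !orbT.
case=> -[a [b [a0 QE]]]; rewrite QE in Q0 Q1 Qb;
  move/(multiple_root_comp_affine _ _ _ _ a0): Q0;
  move/(multiple_root_comp_affine _ _ _ _ a0): Q1;
  move/(multiple_root_comp_affine _ _ _ _ a0): Qb; rewrite mulr0 mulr1 add0r.
- move=> Qb Q1 /multiple_root2_P6 b0; rewrite b0 addr0 in Q1 Qb.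
  have a1 : a = 1 by case: ((multiple_root1_P6 a).1 Q1) => // a_0; rewrite a_0 eqxx in a0.
  by move: (Qb 0%N isT) root_P6_conj_b6; rewrite a1 mul1r addr0 derivn0 => ->.
- move=> _ /multiple_root1_oneB_P6 abp /(multiple_rootW (isT : (1 <= 2)%N)).
  move/multiple_root1_oneB_P6 => bp; move: a0.
  by rewrite -(addrK b a) abp bp subrr eqxx.
Qed.

Lemma crit_vals_01_P6 : crit_vals_01 P6.
Proof.
have root01 z : z \in [:: 0; 1] -> P6.[z] = 0.
  move=> z01; apply/rootP; rewrite root_P6.
  by move: z01; rewrite !inE => /orP[]->; rewrite ?orbT.
move=> w; split.
  case=> z [+ <-]; rewrite root_deriv_P6 !inE => /orP[|/orP[|/orP[|/orP[]]]] /eqP->;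
  by [right; rewrite P6_p6 | left; apply: root01; rewrite !inE eqxx ?orbT].
case=> ->; [exists 0; split; last exact: root01 (mem_head _ _) |
            exists p6; split; last exact: P6_p6].
  by rewrite root_deriv_P6 mem_head.
by rewrite root_deriv_P6 !inE eqxx /= !orbT.
Qed.

Theorem mainTheorem3 :
  (forall (n : nat) (P : {poly C}),
      (n = 3%N \/ n = 4%N) -> size P = n.+1 -> crit_vals_01 P ->
      ext_equiv P (cheb_half n) \/
      (exists m r : nat, (1 <= m)%N /\ (1 <= r)%N /\ (m + r)%N = n /\
                         ext_equiv P (belyi m r))) /\
  (exists P : {poly C},
      size P = 7%N /\ crit_vals_01 P /\
      ~ ext_equiv P (conj_poly P) /\
      (forall Q : {poly C}, real_poly Q -> ~ ext_equiv P Q)).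
Proof.
split.
  move=> n P n34 sizeP crit; right.
  have [m [r [m1 r1 mr PE]]] := crit_vals_01_deg34_belyi n34 sizeP crit.
  by exists m, r.
exists P6; split; first exact: size_P6.
split; first exact: crit_vals_01_P6.
split; first exact: not_ext_equiv_conj_P6.
by move=> Q QR /(ext_equiv_conj_of_real QR); apply: not_ext_equiv_conj_P6.
Qed.
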